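(* Let $p>3$ be a prime. Then for each $k=1,2,\ldots,(p-1)/2$, $$\sum_{j=2}^{p-2k}\frac{\binom{k+j-1}{k}}{k+j}\equiv(-1)^k\left(\frac32\sum_{j=1}^k\frac{\binom{2j}{j}}{j}-\frac{\binom{2k}{k}}{k}\right)-\frac{1}{k+1}\pmod p.$$
   Context: Congruences between rational numbers are understood in the ring of rationals whose denominators are coprime to $p$. *)

From mathcomp Require Import all_boot all_order all_algebra.
Set Implicit Arguments. Unset Strict Implicit. Unset Printing Implicit Defensive.
Import Order.TTheory GRing.Theory Num.Theory.
Local Open Scope ring_scope.

Definition in_Zp (p : nat) (r : rat) : bool := coprime `|denq r|%N p.

Definition rat_congr (p : nat) (a b : rat) : Prop :=
  [/\ in_Zp p a, in_Zp p b & (p%:Z %| numq (a - b))%Z].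

(* Modulo p the left-hand side is, after shifting the index,
   \sum_(1 <= n <= p - k) C(n-1, k)/n - 1/(k+1).  In any field where 1, ..., N and k are
   invertible, \sum_(1 <= n <= N) C(n-1, k)/n = (-1)^k H_N + \sum_(1 <= j <= k) (-1)^(k+j) C(N, j)/j
   (induction on N, with C(N, k) = \sum_(j <= k) (-1)^(k+j) C(N+1, j)).  For N = p - k the
   symmetry n -> p - n gives H_(p-k) = H_(k-1), and C(p-k, j) = (-1)^j C(k+j-1, j) in 'F_p, so
   the sum becomes (-1)^k (H_(k-1) + \sum_(1 <= j <= k) C(k+j-1, j)/j); an induction on k based
   on the hockey-stick identity turns this into the closed form.  The congruence between
   rationals is transferred to 'F_p through the map r |-> num r / den r, which is additive and
   multiplicative on rationals whose denominator is prime to p. *)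

From mathcomp Require Import all_boot all_order all_algebra.
From mathcomp Require Import ring zify.
Import Order.TTheory GRing.Theory Num.Theory.
Local Open Scope ring_scope.
Set Implicit Arguments. Unset Strict Implicit. Unset Printing Implicit Defensive.

Lemma bin_alternating_sum (R : nzRingType) N k :
  'C(N, k)%:R = \sum_(0 <= j < k.+1) (-1) ^+ (k + j) * 'C(N.+1, j)%:R :> R.
Proof.
elim: k => [|k IHk]; first by rewrite big_nat1 !bin0 mulr1.
rewrite big_nat_recr //= exprD -expr2 sqrr_sign mul1r.
under eq_bigr do rewrite addSn exprS mulN1r mulNr.
by rewrite sumrN -IHk binS natrD addrC addrK.
Qed.

Lemma hockey_stick n m : \sum_(0 <= j < m.+1) 'C(n + j, j) = 'C((n + m).+1, m).
Proof.
elim: m => [|m IHm]; first by rewrite big_nat1 !bin0.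
by rewrite big_nat_recr //= IHm !addnS [RHS]binS [RHS]addnC.
Qed.

Lemma sum_bin_shift (R : unitRingType) k m : (0 < m)%N ->
  \sum_(1 <= n < (k + m).+1) ('C(n.-1, k)%:R / n%:R : R)
  = 1 / k.+1%:R + \sum_(2 <= j < m.+1) 'C(k + j - 1, k)%:R / (k + j)%:R.
Proof.
move=> m_gt0; rewrite (@big_cat_nat _ _ _ k.+1) //=; last by lia.
rewrite big1_seq ?add0r => [|n /andP[_]]; last first.
  by rewrite mem_index_iota => /andP[n_gt0 n_le]; rewrite bin_small ?mul0r //; lia.
rewrite big_ltn ?binn; last by lia.
rewrite -[k.+2]/(2 + k)%N big_addn (_ : (k + m).+1 - k = m.+1)%N; last by lia.
by congr (_ + _); apply: eq_bigr => j _; rewrite addnC subn1.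
Qed.

Definition harmonic (R : unitRingType) n : R := \sum_(1 <= i < n.+1) i%:R^-1.

Lemma harmonicS (R : unitRingType) n : harmonic R n.+1 = harmonic R n + n.+1%:R^-1.
Proof. by rewrite /harmonic big_nat_recr. Qed.

Section NonzeroNaturals.
Variables (F : fieldType) (M : nat).
Hypothesis natr_neq0 : forall i, (0 < i <= M)%N -> i%:R != 0 :> F.

Lemma sum_bin_pred_div N k : (N <= M)%N -> (k <= M)%N ->
  \sum_(1 <= n < N.+1) ('C(n.-1, k)%:R / n%:R : F)
  = (-1) ^+ k * harmonic F N + \sum_(1 <= j < k.+1) (-1) ^+ (k + j) * 'C(N, j)%:R / j%:R.
Proof.
move=> + k_le; elim: N => [_|N IHN N_lt].
  rewrite /harmonic big_geq // [in RHS]big_geq // mulr0 add0r big1_seq // => j.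
  by rewrite mem_index_iota /= => /andP[j_gt0 _]; rewrite bin_small // mulr0 mul0r.
have N1_neq0 : N.+1%:R != 0 :> F by apply: natr_neq0; lia.
have bin_div j : (j < k)%N ->
    'C(N, j)%:R / j.+1%:R = 'C(N.+1, j.+1)%:R / N.+1%:R :> F.
  move=> j_lt; apply/eqP; rewrite eqr_div //; last by apply: natr_neq0; lia.
  by rewrite -!natrM mulnC (mul_bin_diag N.+1 j) mulnC.
have binS_div j : (0 < j <= k)%N ->
    'C(N.+1, j)%:R / j%:R = 'C(N, j)%:R / j%:R + 'C(N.+1, j)%:R / N.+1%:R :> F.
  by case: j => // j /andP[_ j_lt]; rewrite -bin_div // -mulrDl -natrD.
have split_sum : \sum_(1 <= j < k.+1) (-1) ^+ (k + j) * 'C(N.+1, j)%:R / j%:R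
    = \sum_(1 <= j < k.+1) (-1) ^+ (k + j) * 'C(N, j)%:R / j%:R
      + (\sum_(1 <= j < k.+1) (-1) ^+ (k + j) * 'C(N.+1, j)%:R) / N.+1%:R :> F.
  rewrite mulr_suml -big_split; apply: eq_big_nat => j j_range /=.
  by rewrite -!mulrA binS_div // mulrDr.
have alt : 'C(N, k)%:R = (-1) ^+ k + \sum_(1 <= j < k.+1) (-1) ^+ (k + j) * 'C(N.+1, j)%:R :> F.
  by rewrite bin_alternating_sum big_ltn // addn0 bin0 mulr1.
rewrite big_nat_recr //= IHN ?(ltnW N_lt) // harmonicS split_sum alt.
ring.
Qed.

Lemma harmonic_add_sum_bin n : (n.+2 <= M)%N ->
  harmonic F n + \sum_(1 <= j < n.+2) 'C(n + j, j)%:R / j%:R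
  = 3%:R / 2%:R * \sum_(1 <= j < n.+2) ('C(2 * j, j)%:R / j%:R)
    - 'C(2 * n.+1, n.+1)%:R / n.+1%:R.
Proof.
elim: n => [|n IHn] n_lt; have two_neq0 : 2%:R != 0 :> F by apply: natr_neq0; lia.
  by rewrite /harmonic big_geq // !big_nat1 add0r add0n binn bin1 muln1 !divr1; field.
have n1_neq0 : n.+1%:R != 0 :> F by apply: natr_neq0; lia.
have n2_neq0 : n.+2%:R != 0 :> F by apply: natr_neq0; lia.
have bin_div i : (i <= n)%N ->
    'C(n + i.+1, i)%:R / i.+1%:R = 'C(n + i.+1, i.+1)%:R / n.+1%:R :> F.
  move=> i_le; apply/eqP; rewrite eqr_div //; last by apply: natr_neq0; lia.
  rewrite -!natrM; apply/eqP; congr _%:R.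
  by rewrite mulnC [in RHS]mulnC mul_bin_left; congr (_ * _)%N; lia.
have binS_div j : (0 < j < n.+2)%N ->
    'C(n.+1 + j, j)%:R / j%:R = 'C(n + j, j)%:R / j%:R + 'C(n + j, j)%:R / n.+1%:R :> F.
  by case: j => // i /andP[_ i_lt]; rewrite -bin_div // -mulrDl -natrD.
have sum_shift : \sum_(1 <= j < n.+2) 'C(n.+1 + j, j)%:R / j%:R
    = \sum_(1 <= j < n.+2) 'C(n + j, j)%:R / j%:R
      + (\sum_(1 <= j < n.+2) 'C(n + j, j))%:R / n.+1%:R :> F.
  rewrite natr_sum mulr_suml -big_split; apply: eq_big_nat => j j_range /=.
  exact: binS_div.
have hockey : (1 + \sum_(1 <= j < n.+2) 'C(n + j, j))%N = 'C(2 * n.+1, n.+1).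
  rewrite (_ : 2 * n.+1 = (n + n.+1).+1)%N; last by lia.
  by rewrite -hockey_stick [RHS]big_ltn //= bin0.
have central : 'C(2 * n.+2, n.+2) = ('C((2 * n.+1).+1, n.+2) * 2)%N.
  have sym : 'C((2 * n.+1).+1, n.+1) = 'C((2 * n.+1).+1, n.+2).
    by rewrite -bin_sub; [congr binomial | ]; lia.
  rewrite (_ : 2 * n.+2 = (2 * n.+1).+2)%N; last by lia.
  by rewrite binS sym muln2 addnn.
rewrite harmonicS big_nat_recr //= sum_shift [in RHS]big_nat_recr //= central.
rewrite (_ : n.+1 + n.+2 = (2 * n.+1).+1)%N; last by lia.
move: (IHn (ltnW n_lt)); rewrite -hockey natrD => /(canRL (addrK _)) ->.
by rewrite natrM; field; rewrite nat1r -natrD two_neq0 n1_neq0 n2_neq0.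
Qed.
End NonzeroNaturals.

Section PrimeField.
Variables (p : nat) (p_pr : prime p).

Lemma Fp_natr_neq0 i : (0 < i < p)%N -> i%:R != 0 :> 'F_p.
Proof. by case/andP=> i_gt0 i_lt; rewrite -(dvdn_pcharf (pchar_Fp p_pr)) gtnNdvd. Qed.

Lemma Fp_natrB n : (n <= p)%N -> (p - n)%:R = - n%:R :> 'F_p.
Proof. by move=> n_le; rewrite natrB // pchar_Fp_0 // sub0r. Qed.

Lemma harmonic_Fp_pred : (2 < p)%N -> harmonic 'F_p p.-1 = 0.
Proof.
move=> p_gt2; have two_neq0 : 2%:R != 0 :> 'F_p by apply: Fp_natr_neq0; lia.
have H_opp : harmonic 'F_p p.-1 = - harmonic 'F_p p.-1.
  rewrite /harmonic prednK ?prime_gt0 // [LHS]big_nat_rev -sumrN.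
  apply: eq_big_nat => i /andP[i_gt0 i_lt] /=.
  by rewrite (_ : 1 + p - i.+1 = p - i)%N ?Fp_natrB ?invrN //; lia.
apply/eqP; rewrite -(mulrI_eq0 _ (lregP two_neq0)) mulr_natl mulr2n {2}H_opp.
by rewrite subrr.
Qed.

Lemma harmonic_Fp_reflect m : (2 < p)%N -> (m < p)%N ->
  harmonic 'F_p (p - m.+1) = harmonic 'F_p m.
Proof.
move=> p_gt2; elim: m => [_|m IHm m_lt].
  by rewrite subn1 harmonic_Fp_pred // /harmonic big_geq.
rewrite harmonicS -IHm ?(ltnW m_lt) // (_ : p - m.+1 = (p - m.+2).+1)%N; last by lia.
rewrite harmonicS (_ : (p - m.+2).+1 = p - m.+1)%N; last by lia.
by rewrite Fp_natrB 1?ltnW // invrN addrNK.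
Qed.

Lemma bin_Fp_sub k j : (0 < k)%N -> (k + j <= p)%N ->
  'C(p - k, j)%:R = (-1) ^+ j * 'C(k + j - 1, j)%:R :> 'F_p.
Proof.
move=> k_gt0; elim: j => [_|j IHj kj_le]; first by rewrite !bin0 mulr1.
have j1_neq0 : j.+1%:R != 0 :> 'F_p by apply: Fp_natr_neq0; lia.
apply: (mulfI j1_neq0); rewrite -natrM mul_bin_left natrM IHj; last by lia.
rewrite (_ : p - k - j = p - (k + j))%N ?Fp_natrB; [| lia | lia].
rewrite (_ : k + j.+1 - 1 = k + j)%N; last by lia.
rewrite [RHS]mulrCA -natrM -(mul_bin_diag (k + j)) natrM subn1 exprS.
ring.
Qed.
End PrimeField.

Lemma sum_bin_div_Fp p k : prime p -> (0 < k)%N -> (2 * k < p)%N ->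
  \sum_(2 <= j < (p - 2 * k).+1) ('C(k + j - 1, k)%:R / (k + j)%:R : 'F_p)
  = (-1) ^+ k * (3%:R / 2%:R * \sum_(1 <= j < k.+1) ('C(2 * j, j)%:R / j%:R)
                 - 'C(2 * k, k)%:R / k%:R) - 1 / k.+1%:R.
Proof.
move=> p_pr; case: k => // n _ n_lt.
have natr_neq0 i : (0 < i <= p.-1)%N -> i%:R != 0 :> 'F_p.
  by move=> i_range; apply: Fp_natr_neq0 => //; lia.
have sign_sum : \sum_(1 <= j < n.+2) (-1) ^+ (n.+1 + j) * 'C(p - n.+1, j)%:R / j%:R
    = (-1) ^+ n.+1 * \sum_(1 <= j < n.+2) 'C(n + j, j)%:R / j%:R :> 'F_p.
  rewrite mulr_sumr; apply: eq_big_nat => j /andP[_ j_lt].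
  rewrite bin_Fp_sub //; last by lia.
  by rewrite (_ : n.+1 + j - 1 = n + j)%N ?exprD -?mulrA ?signrMK //; lia.
have p_gt2 : (2 < p)%N by lia.
have N_le : (p - n.+1 <= p.-1)%N by lia.
have k_le : (n.+1 <= p.-1)%N by lia.
have m_gt0 : (0 < p - 2 * n.+1)%N by lia.
have shift := @sum_bin_shift 'F_p n.+1 _ m_gt0.
rewrite (_ : n.+1 + (p - 2 * n.+1) = p - n.+1)%N in shift; last by lia.
rewrite -[LHS](addKr (1 / n.+2%:R)) -shift (sum_bin_pred_div natr_neq0 N_le k_le).
rewrite sign_sum harmonic_Fp_reflect //; last by lia.
rewrite -(harmonic_add_sum_bin natr_neq0 (n := n)); last by lia.
ring.
Qed.

Section Reduction.
Variables (p : nat) (p_pr : prime p).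

Definition ratFp (r : rat) : 'F_p := (numq r)%:~R / (denq r)%:~R.

Definition reduces_to (r : rat) (x : 'F_p) := in_Zp p r /\ ratFp r = x.

Let dvdz_Fp := dvdz_pcharf (pchar_Fp p_pr).

Lemma in_ZpE r : in_Zp p r = ((denq r)%:~R != 0 :> 'F_p).
Proof. by rewrite /in_Zp coprime_sym prime_coprime // -dvdz_Fp dvdzE. Qed.

Lemma reduces_to_frac r (a b : int) :
  r * b%:~R = a%:~R -> b%:~R != 0 :> 'F_p -> reduces_to r (a%:~R / b%:~R).
Proof.
move=> rb b_neq0.
have cross : numq r * b = a * denq r.
  by apply: (@intr_inj rat); rewrite !rmorphM /= numqE -rb; ring.
have den_neq0 : (denq r)%:~R != 0 :> 'F_p.
  apply: contra b_neq0; rewrite -!dvdz_Fp => /dvdz_trans; apply.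
  have den_num : coprimez (denq r) (numq r) by rewrite coprimezE coprime_sym coprime_num_den.
  by rewrite -(Gauss_dvdzr _ den_num) cross dvdz_mull.
split; first by rewrite in_ZpE.
by apply/eqP; rewrite /ratFp eqr_div // -!intrM cross.
Qed.

Lemma reduces_den r x : reduces_to r x -> (denq r)%:~R != 0 :> 'F_p.
Proof. by case; rewrite in_ZpE. Qed.

Lemma reducesD r s x y : reduces_to r x -> reduces_to s y -> reduces_to (r + s) (x + y).
Proof.
move=> rx sy; have [[_ <-] [_ <-]] := (rx, sy).
have [] := @reduces_to_frac (r + s) (numq r * denq s + numq s * denq r) (denq r * denq s).
- by rewrite !(rmorphM, rmorphD) /= !numqE; ring.
- by rewrite rmorphM mulf_neq0 // (reduces_den rx, reduces_den sy).
move=> rs_Zp rs_red; split=> //; rewrite rs_red /ratFp !(rmorphM, rmorphD) /=.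
by field; rewrite (reduces_den rx) (reduces_den sy).
Qed.

Lemma reducesM r s x y : reduces_to r x -> reduces_to s y -> reduces_to (r * s) (x * y).
Proof.
move=> rx sy; have [[_ <-] [_ <-]] := (rx, sy).
have [] := @reduces_to_frac (r * s) (numq r * numq s) (denq r * denq s).
- by rewrite !rmorphM /= !numqE; ring.
- by rewrite rmorphM mulf_neq0 // (reduces_den rx, reduces_den sy).
move=> rs_Zp rs_red; split=> //; rewrite rs_red /ratFp !rmorphM /=.
by field; rewrite (reduces_den rx) (reduces_den sy).
Qed.

Lemma reducesN r x : reduces_to r x -> reduces_to (- r) (- x).
Proof.
move=> rx; have [_ <-] := rx.
have [] := @reduces_to_frac (- r) (- numq r) (denq r).
- by rewrite rmorphN /= numqE mulNr.
- exact: reduces_den rx.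
by move=> r_Zp r_red; split=> //; rewrite r_red /ratFp rmorphN mulNr.
Qed.

Lemma reduces_ratio m n : n%:R != 0 :> 'F_p -> reduces_to (m%:R / n%:R) (m%:R / n%:R).
Proof.
move=> n_neq0; apply: (@reduces_to_frac _ m n) => //.
by rewrite divfK // pnatr_eq0; apply: contraNneq n_neq0 => ->.
Qed.

Lemma reduces_nat n : reduces_to n%:R n%:R.
Proof. by have := @reduces_ratio n 1; rewrite !divr1; apply; rewrite oner_neq0. Qed.

Lemma reducesX r x n : reduces_to r x -> reduces_to (r ^+ n) (x ^+ n).
Proof.
by move=> rx; elim: n => [|n IHn]; [apply: (reduces_nat 1) | rewrite !exprS; apply: reducesM].
Qed.

Lemma reduces_sum m n (F : nat -> rat) (G : nat -> 'F_p) :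
  (forall i, (m <= i < n)%N -> reduces_to (F i) (G i)) ->
  reduces_to (\sum_(m <= i < n) F i) (\sum_(m <= i < n) G i).
Proof.
move=> FG; rewrite big_nat_cond [X in reduces_to _ X]big_nat_cond.
by apply: big_ind2 => [|r x s y|i /andP[/FG]//]; [apply: (reduces_nat 0) | apply: reducesD].
Qed.

Lemma reduces_congr r s x : reduces_to r x -> reduces_to s x -> rat_congr p r s.
Proof.
move=> rx sx; have [rs_Zp rs_red] := reducesD rx (reducesN sx).
split; [by case: rx | by case: sx |].
move: rs_red; rewrite subrr /ratFp => /eqP; rewrite mulf_eq0 invr_eq0.
by rewrite in_ZpE in rs_Zp; rewrite (negPf rs_Zp) orbF -dvdz_Fp.
Qed.
End Reduction.

Theorem lemma2p3 (p k : nat) :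
  prime p -> (3 < p)%N -> (1 <= k)%N -> (k <= (p - 1)./2)%N ->
  rat_congr p
    (\sum_(2 <= j < (p - 2 * k).+1) ('C(k + j - 1, k)%:R / (k + j)%:R : rat))
    ((-1) ^+ k * ((3%:R / 2%:R) * \sum_(1 <= j < k.+1) ('C(2 * j, j)%:R / j%:R)
                  - 'C(2 * k, k)%:R / k%:R)
     - 1 / (k.+1)%:R).
Proof.
move=> p_pr _ k_gt0; rewrite geq_half_double => k_le.
have k_lt : (2 * k < p)%N by lia.
have den_neq0 i : (0 < i < p)%N -> i%:R != 0 :> 'F_p by exact: Fp_natr_neq0.
apply: (reduces_congr p_pr (x := \sum_(2 <= j < (p - 2 * k).+1) ('C(k + j - 1, k)%:R / (k + j)%:R))).
  by apply: (reduces_sum p_pr) => j j_range; apply: (reduces_ratio p_pr); apply: den_neq0; lia.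
rewrite sum_bin_div_Fp //.
apply: (reducesD p_pr); last by apply/(reducesN p_pr)/(reduces_ratio p_pr 1)/den_neq0; lia.
apply: (reducesM p_pr); first exact/(reducesX p_pr)/(reducesN p_pr)/(reduces_nat p_pr 1).
apply: (reducesD p_pr); last by apply/(reducesN p_pr)/(reduces_ratio p_pr)/den_neq0; lia.
apply: (reducesM p_pr); first by apply/(reduces_ratio p_pr)/den_neq0; lia.
by apply: (reduces_sum p_pr) => j j_range; apply/(reduces_ratio p_pr)/den_neq0; lia.
Qed.
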